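(* Let $n\ge5$. There is no isomorphism preserving the structure of $\mathbb{Z}_2^n$-graded algebra between $\mathbb{O}_{n,0}$ or $\mathbb{O}_{0,n}$ and any $\mathbb{O}_{p,q}$ with $p+q=n$, $p,q\ge1$. Moreover, in the same sense of non-isomorphism: if $n=4k$, the algebras $\mathbb{O}_{n-1,1}$, $\mathbb{O}_{n-2,2}$, $\mathbb{O}_{n-4,4}$ are pairwise non-isomorphic; if $n=4k+1$, $\mathbb{O}_{n-1,1}\not\simeq\mathbb{O}_{n-2,2}$; if $n=4k+2$, the algebras $\mathbb{O}_{n-1,1}$, $\mathbb{O}_{n-2,2}$, $\mathbb{O}_{n-3,3}$ are pairwise non-isomorphic; if $n=4k+3$, $\mathbb{O}_{n-1,1}\not\simeq\mathbb{O}_{n-3,3}$.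
   Context: $\mathbb{Z}_2=\{0,1\}$. For $p+q=n\ge3$, $\mathbb{O}_{p,q}$ is the real algebra with basis $\{u_x: x\in\mathbb{Z}_2^n\}$ and product $u_x\cdot u_y=(-1)^{f(x,y)}u_{x+y}$, where $f(x,y)=\sum_{1\le i<j<k\le n}(x_ix_jy_k+x_iy_jx_k+y_ix_jx_k)+\sum_{1\le i\le j\le n}x_iy_j+\sum_{1\le i\le p}x_iy_i$. An isomorphism preserving the graded structure is an algebra isomorphism sending each homogeneous element (scalar multiple of some $u_x$) to a homogeneous element. *)

From HB Require Import structures.
From mathcomp Require Import all_boot all_order all_algebra.
From mathcomp Require Import reals.
Set Implicit Arguments. Unset Strict Implicit. Unset Printing Implicit Defensive.
Import Order.TTheory GRing.Theory Num.Theory.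
Local Open Scope ring_scope.

(* Z_2^n, coordinates indexed 0..n-1 (paper's index i corresponds to i-1) *)
Notation Z2n n := {ffun 'I_n -> bool}.

Definition addZ2n n (x y : Z2n n) : Z2n n := [ffun i => x i (+) y i].

(* the exponent f(x,y) for O_{p,q} with p + q = n (q = n - p) *)
Definition fexp (n p : nat) (x y : Z2n n) : nat :=
  (\sum_(i < n) \sum_(j < n) \sum_(k < n)
     ((i < j) && (j < k))%N *
       (x i * x j * y k + x i * y j * x k + y i * x j * x k))%N
  + (\sum_(i < n) \sum_(j < n) ((i <= j)%N * x i * y j))%N
  + (\sum_(i < n | (i < p)%N) (x i * y i))%N.

(* underlying real vector space of O_{p,q}: functions Z_2^n -> R,
   coordinates w.r.t. the basis (u_x) *)
Notation Oalg R n := {ffun Z2n n -> R}.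

Definition ubasis (R : realType) n (x : Z2n n) : Oalg R n :=
  [ffun y => (y == x)%:R].

(* bilinear extension of u_x . u_y = (-1)^f(x,y) u_{x+y}, for O_{p, n-p} *)
Definition Omul (R : realType) (n p : nat) (a b : Oalg R n) : Oalg R n :=
  [ffun z => \sum_(x : Z2n n) \sum_(y : Z2n n)
     (if addZ2n x y == z then (-1) ^+ fexp p x y * a x * b y else 0)].

Definition oscale (R : realType) n (c : R) (a : Oalg R n) : Oalg R n :=
  [ffun y => c * a y].

Definition homogeneous (R : realType) n (a : Oalg R n) : Prop :=
  exists (c : R) (x : Z2n n), a = oscale c (ubasis R x).

Definition graded_iso (R : realType) (n p p' : nat) (phi : Oalg R n -> Oalg R n) : Prop :=
  [/\ (forall a b, phi (a + b) = phi a + phi b),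
      (forall (c : R) a, phi (oscale c a) = oscale c (phi a)),
      bijective phi,
      (forall a b, phi (Omul p a b) = Omul p' (phi a) (phi b))
    & (forall a, homogeneous a -> homogeneous (phi a))].

Definition graded_isomorphic (R : realType) (n p p' : nat) : Prop :=
  exists phi : Oalg R n -> Oalg R n, graded_iso p p' phi.

From HB Require Import structures.
From mathcomp Require Import all_boot all_order all_algebra all_field.
From mathcomp Require Import reals.
From mathcomp Require Import zify ring lra.
Set Implicit Arguments. Unset Strict Implicit. Unset Printing Implicit Defensive.
Import Order.TTheory GRing.Theory Num.Theory.
Local Open Scope ring_scope.

(* A graded isomorphism sends each [u_x] to a nonzero multiple of some [u_(sigma x)],
   with [sigma] a permutation of [Z_2^n]; it fixes the unit [u_0], and since
   [u_x ^ 2 = (-1) ^ f(x,x) u_0] it preserves the sign of every square.  Hence the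
   signature [sum_x (-1) ^ f_p(x,x)] of [O_{p,n-p}] is a graded invariant.  One has
   [f_p(x,x) = 3 C(|x|,3) + C(|x|+1,2) + |x /\ [1,p]|], whose first two terms only
   depend on [|x| mod 4]; a root-of-unity filter applied to the generating polynomial
   [sum_x (-1) ^ |x /\ [1,p]| z ^ |x| = (1 - z) ^ p (1 + z) ^ (n - p)] gives twice the
   signature as [2^p 0^(n-p) - 0^p 2^(n-p) + (-4)^(n div 4) T(n mod 4, (n-p) mod 4)]
   for an explicit table [T].  The extreme algebras have a term [+-2^n] too large to
   be compensated, and the listed middle ones have distinct entries in [T]. *)

Definition zeroZ2n {n : nat} : Z2n n := [ffun=> false].

Section Basis.
Variables (R : realType) (n : nat).

Lemma addZ2nn (x : Z2n n) : addZ2n x x = zeroZ2n.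
Proof. by apply/ffunP => i; rewrite !ffunE addbb. Qed.

Lemma fexp0 p : fexp p (zeroZ2n : Z2n n) zeroZ2n = 0%N.
Proof.
by rewrite /fexp !big1 // => *; rewrite ?big1 // => *; rewrite ?big1 // => *;
  rewrite !ffunE ?muln0.
Qed.

Lemma oscale1 (a : Oalg R n) : oscale 1 a = a.
Proof. by apply/ffunP => y; rewrite ffunE mul1r. Qed.

Lemma oscale0 (a : Oalg R n) : oscale 0 a = 0.
Proof. by apply/ffunP => y; rewrite !ffunE mul0r. Qed.

Lemma oscaleA (c d : R) (a : Oalg R n) : oscale c (oscale d a) = oscale (c * d) a.
Proof. by apply/ffunP => y; rewrite !ffunE mulrA. Qed.

Lemma ubasis_neq0 (x : Z2n n) : ubasis R x != 0.
Proof. by apply/eqP => /ffunP /(_ x) /eqP; rewrite !ffunE eqxx oner_eq0. Qed.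

Lemma oscale_ubasis_eq0 (c : R) (x : Z2n n) : (oscale c (ubasis R x) == 0) = (c == 0).
Proof.
apply/eqP/eqP => [/ffunP /(_ x)|->]; last exact: oscale0.
by rewrite !ffunE eqxx mulr1.
Qed.

Lemma Omul_ubasis p (a b : R) (x y : Z2n n) :
  Omul p (oscale a (ubasis R x)) (oscale b (ubasis R y)) =
  oscale (a * b * (-1) ^+ fexp p x y) (ubasis R (addZ2n x y)).
Proof.
apply/ffunP => z; rewrite !ffunE (bigD1 x) //= [X in _ + X]big1 ?addr0; last first.
  move=> x' /negbTE x'x; apply: big1 => y' _.
  by rewrite !ffunE x'x mulr0 mulr0 mul0r if_same.
rewrite (bigD1 y) //= [X in _ + X]big1 ?addr0; last first.
  by move=> y' /negbTE y'y; rewrite !ffunE y'y mulr0 mulr0 if_same.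
rewrite !ffunE !eqxx !mulr1 eq_sym.
by case: eqP => _; rewrite ?mulr1 ?mulr0 //; ring.
Qed.

Lemma ubasis_sqr p (x : Z2n n) :
  Omul p (ubasis R x) (ubasis R x) = oscale ((-1) ^+ fexp p x x) (ubasis R zeroZ2n).
Proof. by rewrite -[ubasis R x]oscale1 Omul_ubasis addZ2nn !mul1r. Qed.

End Basis.

Section GradedIso.
Variables (R : realType) (n p p' : nat) (phi : Oalg R n -> Oalg R n).
Hypothesis phi_iso : graded_iso p p' phi.

Lemma graded_iso_inj : injective phi.
Proof. by case: phi_iso => _ _ [psi phiK _] _ _; exact: can_inj phiK. Qed.

Lemma graded_iso0 : phi 0 = 0.
Proof.
case: phi_iso => phiD _ _ _ _.
by apply: (@addrI _ (phi 0)); rewrite -phiD !addr0.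
Qed.

(* The unique [y] with [phi u_x] a multiple of [u_y]; the default [x] is never used. *)
Definition grade_map (x : Z2n n) : Z2n n :=
  odflt x [pick y | phi (ubasis R x) y != 0].

Lemma graded_iso_ubasis x :
  exists2 c, c != 0 & phi (ubasis R x) = oscale c (ubasis R (grade_map x)).
Proof.
case: phi_iso => _ _ _ _ phi_hom.
have [|c [y phix]] := phi_hom (ubasis R x); first by exists 1, x; rewrite oscale1.
have c_neq0 : c != 0.
  rewrite -(oscale_ubasis_eq0 c y) -phix -graded_iso0.
  by rewrite (inj_eq graded_iso_inj) ubasis_neq0.
exists c => //; rewrite /grade_map; case: pickP => [y' |]; rewrite phix.
  by rewrite !ffunE mulf_eq0 (negbTE c_neq0) pnatr_eq0 eqb0 negbK => /eqP ->.
by move/(_ y); rewrite !ffunE eqxx mulr1 (negbTE c_neq0).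
Qed.

Lemma graded_iso_unit : phi (ubasis R zeroZ2n) = ubasis R zeroZ2n.
Proof.
case: phi_iso => _ _ _ phiM _.
have [c c_neq0 phi0] := graded_iso_ubasis zeroZ2n.
have := congr1 phi (ubasis_sqr R p zeroZ2n).
rewrite fexp0 expr0 oscale1 phiM phi0 Omul_ubasis addZ2nn => /ffunP /(_ (grade_map zeroZ2n)).
rewrite !ffunE eqxx mulr1; case: eqP => [g0|_]; last first.
  by rewrite mulr0 => /esym/eqP; rewrite (negbTE c_neq0).
rewrite g0 fexp0 expr0 !mulr1 => cc.
have c1 : c = 1 by apply: (mulIf c_neq0); rewrite mul1r.
by rewrite c1 oscale1.
Qed.

Lemma grade_map_inj : injective grade_map.
Proof.
case: phi_iso => _ phiZ _ _ _ x1 x2 g12.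
have [c1 _ phi1] := graded_iso_ubasis x1.
have [c2 c2_neq0 phi2] := graded_iso_ubasis x2.
have : phi (oscale c2 (ubasis R x1)) = phi (oscale c1 (ubasis R x2)).
  by rewrite !phiZ phi1 phi2 g12 !oscaleA mulrC.
move/graded_iso_inj/ffunP/(_ x1); rewrite !ffunE eqxx mulr1.
by case: eqP => // _; rewrite mulr0 => /eqP; rewrite (negbTE c2_neq0).
Qed.

(* The [u_0]-coordinate of [phi (u_x ^ 2)] is [+-1 = c ^ 2 * (+-1)], and [c ^ 2 > 0]. *)
Lemma grade_map_square_sign x :
  odd (fexp p x x) = odd (fexp p' (grade_map x) (grade_map x)).
Proof.
case: phi_iso => _ phiZ _ phiM _.
have [c c_neq0 phix] := graded_iso_ubasis x.
have := congr1 phi (ubasis_sqr R p x).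
rewrite phiZ graded_iso_unit phiM phix Omul_ubasis addZ2nn => /ffunP /(_ zeroZ2n).
rewrite !ffunE eqxx !mulr1 -signr_odd -[in X in _ = X -> _]signr_odd.
by case: odd; case: odd => //= h; exfalso; move: h; rewrite expr1 expr0; nra.
Qed.

End GradedIso.

Section PrefixCount.
Local Open Scope nat_scope.

Lemma sum_ltn_mul (h : nat -> nat) c m :
  \sum_(i < m) (i < c) * h i = \sum_(i < minn c m) h i.
Proof.
elim: m => [|m IHm]; first by rewrite minn0 !big_ord0.
rewrite big_ord_recr /= IHm; case: (ltnP m c) => [mc|cm].
  by rewrite (minn_idPr (mc : m.+1 <= c)) big_ord_recr mul1n.
by rewrite (minn_idPl (leqW cm)) mul0n addn0.
Qed.

Variable g : nat -> bool.

Definition prefix_count m := \sum_(i < m) g i.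

Lemma prefix_countS m : prefix_count m.+1 = prefix_count m + g m.
Proof. by rewrite /prefix_count big_ord_recr. Qed.

Lemma sum_pairs_le m : \sum_(j < m) prefix_count j.+1 * g j = 'C((prefix_count m).+1, 2).
Proof.
elim: m => [|m IHm]; first by rewrite big_ord0 /prefix_count big_ord0.
rewrite big_ord_recr /= IHm !prefix_countS; case: (g m) => /=.
  by rewrite muln1 !addn1 [RHS]binS bin1.
by rewrite muln0 !addn0.
Qed.

Lemma sum_pairs_lt m : \sum_(j < m) g j * prefix_count j = 'C(prefix_count m, 2).
Proof.
elim: m => [|m IHm]; first by rewrite big_ord0 /prefix_count big_ord0.
rewrite big_ord_recr /= IHm prefix_countS; case: (g m) => /=.
  by rewrite mul1n addn1 [RHS]binS bin1 addnC.
by rewrite mul0n !addn0.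
Qed.

Lemma sum_triples_lt m :
  \sum_(k < m) g k * \sum_(j < k) g j * prefix_count j = 'C(prefix_count m, 3).
Proof.
elim: m => [|m IHm]; first by rewrite big_ord0 /prefix_count big_ord0.
rewrite big_ord_recr /= IHm prefix_countS sum_pairs_lt; case: (g m) => /=.
  by rewrite mul1n addn1 [RHS]binS addnC.
by rewrite mul0n !addn0.
Qed.

End PrefixCount.

Section DiagonalExponent.
Local Open Scope nat_scope.
Variables (n : nat) (x : Z2n n).

Definition weight := \sum_(i < n) x i.
Definition weight_below p := \sum_(i < n | i < p) x i.

Let gx i : bool := if insub i is Some j then x j else false.

Let gxE (i : 'I_n) : gx i = x i.
Proof. by rewrite /gx valK. Qed.

Let weightE : weight = prefix_count gx n.
Proof. by apply: eq_bigr => i _; rewrite gxE. Qed.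

Let prefix_count_ord (c : nat) : c <= n ->
  \sum_(i < n) (i < c) * gx i = prefix_count gx c.
Proof. by move=> cn; rewrite (sum_ltn_mul (fun i => nat_of_bool (gx i))) (minn_idPl cn). Qed.

Lemma sum_pairs_weight :
  \sum_(i < n) \sum_(j < n) (i <= j) * x i * x j = 'C(weight.+1, 2).
Proof.
rewrite exchange_big /= weightE -sum_pairs_le; apply: eq_bigr => j _.
rewrite -big_distrl /= -gxE -(prefix_count_ord (ltn_ord j)).
by congr (_ * _); apply: eq_bigr => i _; rewrite gxE ltnS.
Qed.

Lemma sum_triples_weight :
  \sum_(i < n) \sum_(j < n) \sum_(k < n)
     ((i < j) && (j < k)) * (x i * x j * x k + x i * x j * x k + x i * x j * x k)
   = 3 * 'C(weight, 3).
Proof.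
under eq_bigr => i _ do rewrite exchange_big.
rewrite exchange_big /=.
under eq_bigr => k _ do rewrite exchange_big.
rewrite /= weightE -sum_triples_lt big_distrr /=; apply: eq_bigr => k _.
transitivity (\sum_(j < n) (j < k) * (3 * gx k * (gx j * prefix_count gx j))).
  apply: eq_bigr => j _.
  transitivity (\sum_(i < n) (3 * gx k * gx j * (j < k)) * ((i < j) * gx i)).
    apply: eq_bigr => i _; rewrite !gxE.
    by case: (x i); case: (x j); case: (x k); case: (i < j); case: (j < k).
  rewrite -big_distrr /= prefix_count_ord; last exact: ltnW.
  ring.
rewrite (sum_ltn_mul (fun j => 3 * gx k * (gx j * prefix_count gx j))) (minn_idPl (ltnW (ltn_ord k))).
by rewrite -big_distrr /= mulnA.
Qed.

Lemma fexp_diag p : fexp p x x = 3 * 'C(weight, 3) + 'C(weight.+1, 2) + weight_below p.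
Proof.
rewrite /fexp sum_triples_weight sum_pairs_weight; congr (_ + _).
by apply: eq_bigr => i _; case: (x i).
Qed.

End DiagonalExponent.

Definition weight_sign (W : nat) : algC := (-1) ^+ (3 * 'C(W, 3) + 'C(W.+1, 2))%N.

Lemma weight_signD4 W : weight_sign (W + 4) = weight_sign W.
Proof.
rewrite /weight_sign -signr_odd -[RHS]signr_odd addn4.
have -> : (3 * 'C(W.+4, 3) + 'C((W.+4).+1, 2) =
           3 * 'C(W, 3) + 'C(W.+1, 2) + 2 * (6 * 'C(W, 2) + 11 * W + 11))%N.
  by rewrite !binS !bin1 !bin0; lia.
by rewrite oddD oddM andFb addbF.
Qed.

Lemma weight_sign_mod4 W : weight_sign W = weight_sign (W %% 4).
Proof.
rewrite {1}(divn_eq W 4); elim: (W %/ 4)%N => [|q IHq]; first by rewrite add0n.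
by rewrite mulSn -addnA addnC weight_signD4.
Qed.

Lemma expr_mod4 (S : pzRingType) (z : S) W : z ^+ 4 = 1 -> z ^+ W = z ^+ (W %% 4).
Proof. by move=> z4; rewrite {1}(divn_eq W 4) exprD mulnC exprM z4 expr1n mul1r. Qed.

(* Root-of-unity filter: [weight_sign W] is [1] if [4 %| W] and [-1] otherwise. *)
Lemma weight_sign_filter W :
  2 * weight_sign W = 1 + (-1) ^+ W + 'i ^+ W + (- 'i) ^+ W - 2.
Proof.
have i2 := @sqrCi algC.
have i4 : 'i ^+ 4 = 1 :> algC by rewrite (exprM _ 2 2) i2 sqrrN expr1n.
have m4 : (-1) ^+ 4 = 1 :> algC by rewrite (exprM _ 2 2) sqrrN !expr1n.
have mi4 : (- 'i) ^+ 4 = 1 :> algC by rewrite exprNn m4 mul1r.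
rewrite weight_sign_mod4 (expr_mod4 W i4) (expr_mod4 W m4) (expr_mod4 W mi4).
have : (W %% 4 < 4)%N by rewrite ltn_mod.
by case: (W %% 4)%N => [|[|[|[|//]]]] _; rewrite /weight_sign /=; ring: i2.
Qed.

Definition gen_poly (n p : nat) (z : algC) :=
  \sum_(x : Z2n n) (-1) ^+ (weight_below x p) * z ^+ (weight x).

Lemma gen_poly_prod n p z :
  gen_poly n p z = \prod_(i < n) (1 + (if (i < p)%N then -1 else 1) * z).
Proof.
rewrite /gen_poly; symmetry.
transitivity (\prod_(i < n) \sum_(b : bool) ((if (i < p)%N then -1 else 1) * z) ^+ b).
  by apply: eq_bigr => i _; rewrite big_bool /= expr1 expr0 addrC.
rewrite bigA_distr_bigA /=; apply: eq_bigr => x _.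
under eq_bigr => i _ do rewrite exprMn.
rewrite big_split /= prodrXr; congr (_ * _).
rewrite /weight_below -prodrXr [in RHS]big_mkcond /=; apply: eq_bigr => i _.
by case: ifP => _; rewrite ?expr1n.
Qed.

Lemma gen_polyE n p z : (p <= n)%N -> gen_poly n p z = (1 - z) ^+ p * (1 + z) ^+ (n - p).
Proof.
move=> pn; rewrite gen_poly_prod.
rewrite -(big_mkord xpredT (fun i => 1 + (if (i < p)%N then -1 else 1) * z)).
rewrite (big_cat_nat (leq0n p) pn) /=.
rewrite (eq_big_nat _ _ (F2 := fun=> 1 - z)); last first.
  by move=> i /andP [_ ->]; rewrite mulN1r.
rewrite [X in _ * X](eq_big_nat _ _ (F2 := fun=> 1 + z)); last first.
  by move=> i /andP [ip _]; rewrite ltnNge ip mul1r.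
by rewrite !prodr_const_nat subn0.
Qed.

Definition signature (n p : nat) : algC := \sum_(x : Z2n n) (-1) ^+ fexp p x x.

Lemma signature_filter n p :
  2 * signature n p =
    gen_poly n p (-1) - gen_poly n p 1 + gen_poly n p 'i + gen_poly n p (- 'i).
Proof.
rewrite /signature /gen_poly mulr_sumr -sumrB -!big_split /=; apply: eq_bigr => x _.
have := weight_sign_filter (weight x); rewrite /weight_sign => ws.
rewrite fexp_diag exprD mulrA ws expr1n; ring.
Qed.

Definition unity_term (r k : nat) : algC :=
  'i ^+ k * (1 - 'i) ^+ r + (- 'i) ^+ k * (1 + 'i) ^+ r.

Definition unity_tab (r k : nat) : int :=
  nth 0 (nth [::] [:: [:: 2; 0; -2; 0]; [:: 2; 2; -2; -2];
                      [:: 0; 4; 0; -4]; [:: -4; 4; 4; -4]] r) k.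

Lemma unity_termE r k : (r < 4)%N -> (k < 4)%N -> unity_term r k = (unity_tab r k)%:~R.
Proof.
have i2 := @sqrCi algC.
case: r => [|[|[|[|//]]]] _; case: k => [|[|[|[|//]]]] _;
  by rewrite /unity_term /unity_tab /=; ring: i2.
Qed.

Lemma gen_poly_i n p : (p <= n)%N ->
  gen_poly n p 'i + gen_poly n p (- 'i) = (-4) ^+ (n %/ 4) * unity_term (n %% 4) ((n - p) %% 4).
Proof.
move=> pn; rewrite !gen_polyE // opprK.
have i2 := @sqrCi algC.
have i4 : 'i ^+ 4 = 1 :> algC by rewrite (exprM _ 2 2) i2 sqrrN expr1n.
have mi4 : (- 'i) ^+ 4 = 1 :> algC by rewrite exprNn i4 mulr1 (exprM _ 2 2) sqrrN !expr1n.
have e1 : 1 + 'i = 'i * (1 - 'i) :> algC by ring: i2.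
have e2 : 1 - 'i = - 'i * (1 + 'i) :> algC by ring: i2.
have exprn_mod4 z : z ^+ 4 = -4 -> z ^+ n = (-4) ^+ (n %/ 4) * z ^+ (n %% 4).
  by move=> z4; rewrite {1}(divn_eq n 4) exprD mulnC exprM z4.
have u4 : (1 + 'i) ^+ 4 = -4 :> algC by rewrite (exprM _ 2 2); ring: i2.
have v4 : (1 - 'i) ^+ 4 = -4 :> algC by rewrite (exprM _ 2 2); ring: i2.
have -> : (1 - 'i) ^+ p * (1 + 'i) ^+ (n - p) = 'i ^+ (n - p) * (1 - 'i) ^+ n :> algC.
  by rewrite e1 exprMn mulrCA -exprD subnKC.
have -> : (1 + 'i) ^+ p * (1 - 'i) ^+ (n - p) = (- 'i) ^+ (n - p) * (1 + 'i) ^+ n :> algC.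
  by rewrite e2 exprMn mulrCA -exprD subnKC.
rewrite (expr_mod4 _ i4) (expr_mod4 _ mi4) (exprn_mod4 _ _ u4) (exprn_mod4 _ _ v4) /unity_term.
by rewrite mulrDr mulrCA [X in _ + X]mulrCA.
Qed.

(* The junk powers [0 ^+ k] single out the two extreme algebras [O_{0,n}] and [O_{n,0}]. *)
Definition signature_int (n p : nat) : int :=
  2 ^+ p * 0 ^+ (n - p) - 0 ^+ p * 2 ^+ (n - p)
  + (-4) ^+ (n %/ 4) * unity_tab (n %% 4) ((n - p) %% 4).

Lemma signatureE n p : (p <= n)%N -> 2 * signature n p = (signature_int n p)%:~R.
Proof.
move=> pn; rewrite signature_filter -addrA gen_poly_i // !gen_polyE // opprK subrr.
rewrite unity_termE ?ltn_mod // /signature_int.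
by rewrite !(rmorphD, rmorphN, rmorphM, rmorphXn, rmorph0, rmorph1).
Qed.

Lemma signature_graded_iso (R : realType) n p p' :
  graded_isomorphic R n p p' -> signature n p = signature n p'.
Proof.
case=> phi phi_iso; rewrite /signature [RHS](reindex_inj (grade_map_inj phi_iso)).
by apply: eq_bigr => x _; rewrite -signr_odd (grade_map_square_sign phi_iso) signr_odd.
Qed.

Lemma signature_int_graded_iso (R : realType) n p p' : (p <= n)%N -> (p' <= n)%N ->
  graded_isomorphic R n p p' -> signature_int n p = signature_int n p'.
Proof.
move=> pn p'n iso; apply: (@intr_inj algC).
by rewrite -!signatureE // (signature_graded_iso iso).
Qed.

Lemma not_graded_isomorphic (R : realType) n p p' : (p <= n)%N -> (p' <= n)%N ->
  signature_int n p != signature_int n p' ->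
  ~ graded_isomorphic R n p p' /\ ~ graded_isomorphic R n p' p.
Proof.
move=> pn p'n /eqP neq; split=> iso; apply: neq.
  exact: signature_int_graded_iso iso.
by apply/esym; apply: signature_int_graded_iso iso.
Qed.

Lemma signature_int_inner n p : (0 < p < n)%N ->
  signature_int n p = (-4) ^+ (n %/ 4) * unity_tab (n %% 4) ((n - p) %% 4).
Proof.
case/andP=> p_gt0 pn; rewrite /signature_int !expr0n.
by rewrite (gtn_eqF p_gt0) subn_eq0 leqNgt pn mulr0 mul0r subr0 add0r.
Qed.

Lemma signature_int_full n : (0 < n)%N ->
  signature_int n n = 2 ^+ n + (-4) ^+ (n %/ 4) * unity_tab (n %% 4) 0.
Proof.
by move=> n_gt0; rewrite /signature_int subnn expr0 (expr0n _ n) gtn_eqF // mul0r subr0 mulr1.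
Qed.

Lemma signature_int_empty n : (0 < n)%N ->
  signature_int n 0 = - 2 ^+ n + (-4) ^+ (n %/ 4) * unity_tab (n %% 4) (n %% 4).
Proof.
by move=> n_gt0; rewrite /signature_int subn0 !expr0 (expr0n _ n) gtn_eqF // mul1r mul1r sub0r.
Qed.

Lemma unity_tab_norm r k : (r < 4)%N -> (k < 4)%N ->
  `|unity_tab r k| <= (if (r < 2)%N then 2 else 4).
Proof. by case: r => [|[|[|[|//]]]] _; case: k => [|[|[|[|//]]]]. Qed.

Lemma unity_tab_dist r k k' : (r < 4)%N -> (k < 4)%N -> (k' < 4)%N ->
  `|unity_tab r k - unity_tab r k'| <= (if (r < 2)%N then 4 else 8).
Proof.
move=> r4 k4 k'4; apply: le_trans (ler_normB _ _) _.
by have := lerD (unity_tab_norm r4 k4) (unity_tab_norm r4 k'4); case: ifP.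
Qed.

(* [|2 ^ n| = 4 ^ q * (4 ^ q * 2 ^ r)] for [n = 4 q + r], which is too large for [|d|]. *)
Lemma expr2_neq_mul_exprN4 n (d : int) : (5 <= n)%N ->
  `|d| <= (if (n %% 4 < 2)%N then 4 else 8) -> 2 ^+ n != (-4) ^+ (n %/ 4) * d.
Proof.
move=> n5 d_le; apply/eqP => /(congr1 Num.norm).
rewrite normrM !normrX normrN [`|4|]ger0_norm // [`|2|]ger0_norm //.
rewrite {1}(divn_eq n 4) exprD mulnC exprM (_ : 2 ^+ 4 = 4 * 4) // exprMn -mulrA.
move/(mulfI (expf_neq0 _ (isT : (4 : int) != 0))) => dE.
have q_gt0 : (0 < n %/ 4)%N by rewrite divn_gt0 // ltnW.
have q4 : 4 <= 4 ^+ (n %/ 4) :> int by rewrite -[X in X <= _]expr1 ler_eXn2l.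
move: d_le; rewrite -dE; have : (n %% 4 < 4)%N by rewrite ltn_mod.
case r_eq : (n %% 4)%N => [|[|[|[|//]]]] _ /=.
- have q_gt1 : (1 < n %/ 4)%N by move: (divn_eq n 4); rewrite r_eq; lia.
  have q16 : 16 <= 4 ^+ (n %/ 4) :> int by rewrite (_ : 16 = 4 ^+ 2) // ler_eXn2l.
  lra.
all: lra.
Qed.

Lemma signature_int_full_neq n p : (5 <= n)%N -> (0 < p < n)%N ->
  signature_int n n != signature_int n p.
Proof.
move=> n5 pn; rewrite signature_int_full ?signature_int_inner //; last by lia.
have := expr2_neq_mul_exprN4 n5 (unity_tab_dist (ltn_mod n 4) (ltn_mod (n - p) 4) (isT : (0 < 4)%N)).
by apply: contra => /eqP eq; rewrite mulrBr -eq addrK.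
Qed.

Lemma signature_int_empty_neq n p : (5 <= n)%N -> (0 < p < n)%N ->
  signature_int n 0 != signature_int n p.
Proof.
move=> n5 pn; rewrite signature_int_empty ?signature_int_inner //; last by lia.
have := expr2_neq_mul_exprN4 n5 (unity_tab_dist (ltn_mod n 4) (ltn_mod n 4) (ltn_mod (n - p) 4)).
by apply: contra => /eqP eq; rewrite mulrBr -eq; apply/eqP; ring.
Qed.

Lemma signature_int_inner_neq n q q' : (0 < q < n)%N -> (0 < q' < n)%N ->
  unity_tab (n %% 4) (q %% 4) != unity_tab (n %% 4) (q' %% 4) ->
  signature_int n (n - q) != signature_int n (n - q').
Proof.
move=> qn q'n; rewrite !signature_int_inner ?subKn //; try lia.
by rewrite (inj_eq (mulfI _)) // expf_neq0.
Qed.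

Local Open Scope nat_scope.

Theorem mainTheorem12 (R : realType) (n : nat) (hn : (5 <= n)%N) :
  let noniso := fun p p' : nat =>
    ~ graded_isomorphic R n p p' /\ ~ graded_isomorphic R n p' p in
  (forall p : nat, (1 <= p)%N -> (p <= n - 1)%N -> noniso n p /\ noniso 0 p)
  /\ ((n %% 4 = 0)%N ->
        noniso (n - 1) (n - 2) /\ noniso (n - 1) (n - 4) /\ noniso (n - 2) (n - 4))
  /\ ((n %% 4 = 1)%N -> noniso (n - 1) (n - 2))
  /\ ((n %% 4 = 2)%N ->
        noniso (n - 1) (n - 2) /\ noniso (n - 1) (n - 3) /\ noniso (n - 2) (n - 3))
  /\ ((n %% 4 = 3)%N -> noniso (n - 1) (n - 3)).
Proof.
move=> noniso.
have inner q q' : (0 < q < n)%N -> (0 < q' < n)%N ->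
    unity_tab (n %% 4) (q %% 4) != unity_tab (n %% 4) (q' %% 4) -> noniso (n - q) (n - q').
  move=> qn q'n tab_neq; apply: not_graded_isomorphic; rewrite ?leq_subr //.
  exact: signature_int_inner_neq.
split.
  move=> p p_gt0 pn; have p_inner : (0 < p < n)%N by lia.
  split; apply: not_graded_isomorphic; rewrite ?leq0n //; try lia.
    exact: signature_int_full_neq.
  exact: signature_int_empty_neq.
clearbody noniso.
by split; [|split; [|split]] => r_eq; do ?split; apply: inner; rewrite ?r_eq //; lia.
Qed.
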